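(* Let $q$ be a power of a prime $p$ and let $L\subseteq[q-1]$. Let $\mathcal{F}\subseteq 2^{[n]}$ be $q$-modular $L$-differencing Sperner. Suppose $g\in\mathbb{Z}[y]$ is a polynomial of degree $d$ such that $v_p(g(0))<v_p(g(u))$ for every $u\in L+q\mathbb{Z}$. Then $$|\mathcal{F}|\le\sum_{i=0}^{d}\binom{n}{i}.$$ If in addition either $v_p(g(0))\le v_p(g(u-1))$ for every $u\in L+q\mathbb{Z}$, or $v_p(g(0))\le v_p(g(u+1))$ for every $u\in L+q\mathbb{Z}$, then $$|\mathcal{F}|\le\sum_{i=0}^{d}\binom{n-1}{i}.$$
   Context: $[n]=\{1,\ldots,n\}$, $2^{[n]}$ is the family of all subsets of $[n]$, $L+q\mathbb{Z}=\{\ell+qt:\ell\in L,t\in\mathbb{Z}\}$. For a prime $p$ and integer $m$, $v_p(m)$ is the largest $k\ge0$ with $p^k\mid m$, and $v_p(0)=+\infty$. For $L\subseteq[q-1]$, $\mathcal{F}$ is $q$-modular $L$-differencing Sperner if for all distinct $A,B\in\mathcal{F}$, $|A\setminus B|\equiv\ell\pmod q$ for some $\ell\in L$. *)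

From HB Require Import structures.
From mathcomp Require Import all_boot all_order all_algebra.
Set Implicit Arguments. Unset Strict Implicit. Unset Printing Implicit Defensive.
Import Order.TTheory GRing.Theory Num.Theory.

(* p-adic valuation of an integer, with v_p(0) = +oo encoded as None. *)
Definition vp (p : nat) (m : int) : option nat :=
  if m == 0 then None else Some (logn p `|m|%N).

Definition ole (a b : option nat) : bool :=
  match a, b with
  | _, None => true
  | None, Some _ => false
  | Some x, Some y => (x <= y)%N
  end.
Definition olt (a b : option nat) : bool :=
  match a, b with
  | None, _ => false
  | Some _, None => true
  | Some x, Some y => (x < y)%N
  end.

Definition in_LqZ (L : seq nat) (q : nat) (u : int) : Prop :=
  exists l t, l \in L /\ u = (l%:Z + (q%:Z) * t)%R.

Definition differencing_sperner (n q : nat) (L : seq nat)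
  (F : {set {set 'I_n}}) : Prop :=
  forall A B, A \in F -> B \in F -> A != B ->
    exists2 l, l \in L & #|A :\: B| = l %[mod q].

From mathcomp Require Import all_boot all_order all_algebra.
Set Implicit Arguments. Unset Strict Implicit. Unset Printing Implicit Defensive.
Import Order.TTheory GRing.Theory Num.Theory.
Local Open Scope ring_scope.

(* Polynomial method.  Write n = m + 1, split off the last point of [n], and
   for A in F consider the function on subsets Y of [m]
     f_A(Y) = g(|Y \ A'|)  if the last point lies in A,   g(|A' \ Y|) otherwise,
   where A' is A without the last point.  At Y = B' this is g(|B \ A|) or
   g(|A \ B|), so the evaluation matrix (f_A(B'))_{A,B} has g(0) on the diagonal
   and, off it, entries divisible by a higher power of p than g(0).  Such a matrix
   is nonsingular: in a nonzero kernel vector, the coordinate of least p-adic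
   valuation cannot be cancelled by the others.  Hence the f_A are linearly
   independent.  Each f_A is a polynomial of degree <= d in the indicator
   coordinates of Y, i.e. lies in the span of the functions Y |-> [X <= Y] with
   |X| <= d, of dimension sum_{i<=d} C(m, i).  Since the Sperner condition
   constrains both |A \ B| and |B \ A|, the bound with n - 1 needs no further
   hypothesis on g. *)

Section LowDegree.
Variable m : nat.
Notation V := {ffun {set 'I_m} -> rat^o}.

Definition set_monomial (X : {set 'I_m}) : V :=
  [ffun Y : {set 'I_m} => (X \subset Y)%:R].

Definition small_sets j := [pred X : {set 'I_m} | (#|X| <= j)%N].

Definition low_degree j : {vspace V} :=
  <<[seq set_monomial X | X in small_sets j]>>%VS.

Lemma card_small_sets d : #|small_sets d| = (\sum_(0 <= i < d.+1) 'C(m, i))%N.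
Proof.
have binE i : 'C(m, i) = #|[set X : {set 'I_m} | #|X| == i]|.
  by rewrite card_draws card_ord.
elim: d => [|d IH].
  by rewrite big_nat1 binE; apply: eq_card => X; rewrite !inE leqn0.
rewrite big_nat_recr //= -IH binE.
rewrite -[LHS](cardID (small_sets d)).
congr (_ + _)%N; apply: eq_card => X /=; rewrite !inE.
  by rewrite andb_idl // => /leqW.
by rewrite -ltnNge eqn_leq andbC.
Qed.

Lemma dim_low_degree j : (\dim (low_degree j) <= \sum_(0 <= i < j.+1) 'C(m, i))%N.
Proof. by rewrite -card_small_sets (leq_trans (dim_span _)) // size_map -cardE. Qed.

Lemma set_monomial_low_degree (X : {set 'I_m}) j :
  (#|X| <= j)%N -> set_monomial X \in low_degree j.
Proof. by move=> leXj; apply/memv_span/image_f. Qed.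

Lemma low_degreeS i j : (i <= j)%N -> (low_degree i <= low_degree j)%VS.
Proof.
move=> le_ij; apply/sub_span => _ /imageP[X leXi ->].
by apply/image_f; rewrite inE (leq_trans leXi).
Qed.

Lemma set_monomialM (X X' : {set 'I_m}) :
  set_monomial X * set_monomial X' = set_monomial (X :|: X').
Proof.
by apply/ffunP => Y; rewrite !ffunE subUset; case: (X \subset Y); case: (X' \subset Y).
Qed.

Lemma mul_low_degree i j u v :
  u \in low_degree i -> v \in low_degree j -> u * v \in low_degree (i + j).
Proof.
move=> /coord_span -> /coord_span ->; rewrite mulr_suml; apply: rpred_sum => a _.
rewrite mulr_sumr; apply: rpred_sum => b _.
have -> : forall (c c' : rat) (f f' : V), (c *: f) * (c' *: f') = (c * c') *: (f * f').
  by move=> c c' f f'; apply/ffunP => Y; rewrite !ffunE /= mulrACA.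
apply: rpredZ; rewrite -!tnth_nth.
case/imageP: (mem_tnth a (image_tuple set_monomial (small_sets i))) => X leXi ->.
case/imageP: (mem_tnth b (image_tuple set_monomial (small_sets j))) => X' leX'j ->.
rewrite set_monomialM set_monomial_low_degree //.
by rewrite (leq_trans (leq_card_setU X X')) ?leq_add.
Qed.

Lemma affine_low_degree (c0 : rat) (c : 'I_m -> rat) :
  [ffun Y : {set 'I_m} => c0 + \sum_(i in Y) c i] \in low_degree 1.
Proof.
have -> : [ffun Y : {set 'I_m} => c0 + \sum_(i in Y) c i] =
    c0 *: set_monomial set0 + \sum_i c i *: set_monomial [set i].
  apply/ffunP => Y; rewrite !ffunE sum_ffunE sub0set big_mkcond /=.
  congr (_ + _); first exact: esym (mulr1 c0).
  apply: eq_bigr => i _; rewrite !ffunE sub1set.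
  by case: (i \in Y); [exact: esym (mulr1 _) | exact: esym (mulr0 _)].
by apply: rpredD; [|apply: rpred_sum => i _]; apply/rpredZ/set_monomial_low_degree;
  rewrite ?cards0 ?cards1.
Qed.

Lemma exprn_low_degree u j : u \in low_degree 1 -> u ^+ j \in low_degree j.
Proof.
move=> u1; elim: j => [|j IHj]; last by rewrite exprS (mul_low_degree u1 IHj).
have -> : u ^+ 0 = set_monomial set0 by apply/ffunP => Y; rewrite !ffunE sub0set.
by rewrite set_monomial_low_degree ?cards0.
Qed.

Lemma horner_low_degree (g : {poly int}) (c : {set 'I_m} -> nat) :
  [ffun Y => (c Y)%:R] \in low_degree 1 ->
  [ffun Y => (g.[(c Y)%:Z])%:~R] \in low_degree (size g).-1.
Proof.
move=> c1; set u : V := [ffun Y => (c Y)%:R].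
have uX k Y : (u ^+ k) Y = (c Y)%:R ^+ k.
  by elim: k => [|k IHk]; rewrite ?expr0 ?exprS ffunE ?IHk ?ffunE.
have -> : [ffun Y => (g.[(c Y)%:Z])%:~R] = \sum_(k < size g) (g`_k)%:~R *: u ^+ k :> V.
  apply/ffunP => Y; rewrite ffunE sum_ffunE horner_coef rmorph_sum /=.
  by apply: eq_bigr => k _; rewrite !ffunE uX rmorphM rmorphXn /= pmulrn.
apply: rpred_sum => k _; apply/rpredZ/(subvP _ _ (exprn_low_degree k c1))/low_degreeS.
by rewrite -ltnS (leq_trans (ltn_ord k)) // leqSpred.
Qed.

End LowDegree.

Section PDominantMatrix.
Variables (p e N : nat) (M : 'M[int]_N).
Hypotheses (p_pr : prime p)
  (M_diag : forall i, ~~ (p ^ e.+1 %| `|M i i|)%N)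
  (M_offdiag : forall i j, i != j -> (p ^ e.+1 %| `|M i j|)%N).

Lemma p_dominant_int_kernel (K : 'rV[int]_N) : K *m M = 0 -> K = 0.
Proof.
move=> KM0; pose k := K 0.
have kM0 j : \sum_i k i * M i j = 0 by move/rowP/(_ j): KM0; rewrite !mxE.
apply/rowP => i0; rewrite mxE; apply/eqP/negPn/negP => ki0.
case: (@arg_minnP _ i0 (fun i => k i != 0) (fun i => logn p `|k i|) ki0) => i ki min_k.
set a := logn p `|k i| in min_k.
have pa_k j : (p ^ a %| `|k j|)%N.
  have [->|kj] := eqVneq (k j) 0; first exact: dvdn0.
  by rewrite pfactor_dvdn ?absz_gt0 ?min_k.
have Mii : M i i != 0 by apply: contraNneq (M_diag i) => ->; rewrite dvdn0.
have : ((p ^ (a + e.+1))%:Z %| k i * M i i)%Z.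
  move/eqP: (kM0 i); rewrite (bigD1 i) //= addr_eq0 => /eqP ->.
  rewrite rpredN; apply: rpred_sum => j ji.
  by rewrite dvdzE abszM expnD dvdn_mul ?M_offdiag.
rewrite dvdzE abszM pfactor_dvdn ?muln_gt0 ?absz_gt0 ?ki // lognM ?absz_gt0 //.
by rewrite leq_add2l -pfactor_dvdn ?absz_gt0 // (negbTE (M_diag i)).
Qed.

Lemma p_dominant_row_free : row_free (map_mx intr M : 'M[rat]_N).
Proof.
apply: inj_row_free => k kM0.
pose D : int := \prod_i denq (k 0 i).
pose K := \row_i (numq (k 0 i) * \prod_(j | j != i) denq (k 0 j)).
have DK : map_mx intr K = D%:~R *: k.
  apply/rowP => i; rewrite !mxE [D](bigD1 i) //= !intrM numqE.
  by rewrite [RHS]mulrC mulrA.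
have /p_dominant_int_kernel K0 : K *m M = 0.
  apply/rowP => j; apply: (@intr_inj rat).
  move/rowP/(_ j): (@map_mxM _ rat intr _ _ _ K M).
  by rewrite DK -scalemxAl kM0 scaler0 !mxE => ->; rewrite rmorph0.
have D0 : D != 0 by rewrite prodf_seq_neq0; apply/allP => j _; exact: denq_neq0.
by move/eqP: DK; rewrite K0 map_mx0 eq_sym scaler_eq0 intr_eq0 (negbTE D0) => /eqP.
Qed.

End PDominantMatrix.

Lemma free_of_evaluations (T : finType) N (f : 'I_N -> {ffun T -> rat^o})
    (x : 'I_N -> T) (M : 'M[rat]_N) :
  row_free M -> (forall i j, f i (x j) = M i j) -> free [tuple f i | i < N].
Proof.
move=> M_free fxM; apply/freeP => k kf0 i.
have : \row_i k i *m M = 0.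
  apply/rowP => j; have := congr1 (fun h : {ffun T -> rat^o} => h (x j)) kf0.
  rewrite sum_ffunE ffunE !mxE => kfx; rewrite -[RHS]kfx.
  by apply: eq_bigr => i' _; rewrite mxE ffunE -tnth_nth tnth_mktuple fxM.
by rewrite -(mul0mx _ M) => /(row_free_inj M_free)/rowP/(_ i); rewrite !mxE.
Qed.

Lemma vp_lt_dvdn p (a b : int) : prime p -> a != 0 ->
  olt (vp p a) (vp p b) -> (p ^ (logn p `|a|).+1 %| `|b|)%N.
Proof.
move=> p_pr a0; rewrite /vp (negbTE a0).
by case: eqP => [-> | /eqP b0] //= lt_ab; rewrite pfactor_dvdn ?absz_gt0.
Qed.

Section Restriction.
Variable m : nat.

Definition restrict (B : {set 'I_m.+1}) : {set 'I_m} :=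
  [set i | widen_ord (leqnSn m) i \in B].

Lemma card_restrict (B : {set 'I_m.+1}) :
  #|B| = (#|restrict B| + (ord_max \in B))%N.
Proof.
rewrite -!sum1_card big_mkcond big_ord_recr /=; congr (_ + _)%N.
by rewrite [RHS]big_mkcond; apply: eq_bigr => i _; rewrite inE.
Qed.

Lemma restrictD (A B : {set 'I_m.+1}) :
  restrict (B :\: A) = restrict B :\: restrict A.
Proof. by apply/setP => i; rewrite !inE. Qed.

Definition diff_size (A : {set 'I_m.+1}) (Y : {set 'I_m}) : nat :=
  if ord_max \in A then #|Y :\: restrict A| else #|restrict A :\: Y|.

Lemma diff_size_restrict (A B : {set 'I_m.+1}) :
  diff_size A (restrict B) = if ord_max \in A then #|B :\: A| else #|A :\: B|.
Proof.
rewrite /diff_size; case: ifP => Amax.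
  by rewrite -restrictD [RHS]card_restrict inE Amax addn0.
by rewrite -restrictD [RHS]card_restrict inE Amax andbF addn0.
Qed.

Lemma cardsI_sum (Y X : {set 'I_m}) : #|Y :&: X| = (\sum_(i in Y) (i \in X))%N.
Proof.
rewrite -sum1_card big_mkcond [RHS]big_mkcond; apply: eq_bigr => i _.
by rewrite inE; case: (i \in Y); case: (i \in X).
Qed.

Lemma diff_size_low_degree (A : {set 'I_m.+1}) :
  [ffun Y : {set 'I_m} => (diff_size A Y)%:R] \in low_degree m 1.
Proof.
rewrite /diff_size; case: (ord_max \in A).
  have -> : [ffun Y : {set 'I_m} => #|Y :\: restrict A|%:R] =
      [ffun Y : {set 'I_m} => 0 + \sum_(i in Y) (i \notin restrict A)%:R]
      :> {ffun _ -> rat^o}.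
    apply/ffunP => Y; rewrite !ffunE add0r setDE cardsI_sum natr_sum.
    by apply: eq_bigr => i _; rewrite inE.
  exact: affine_low_degree.
have -> : [ffun Y : {set 'I_m} => #|restrict A :\: Y|%:R] =
    [ffun Y : {set 'I_m} => #|restrict A|%:R + \sum_(i in Y) - (i \in restrict A)%:R]
    :> {ffun _ -> rat^o}.
  apply/ffunP => Y; rewrite !ffunE sumrN -natr_sum -cardsI_sum setIC.
  by rewrite -(cardsID Y (restrict A)) natrD addrAC subrr add0r.
exact: affine_low_degree.
Qed.

Lemma family_card_bound (F : {set {set 'I_m.+1}}) p d (g : {poly int}) :
  prime p -> size g = d.+1 ->
  (forall A B, A \in F -> B \in F -> A != B ->
     olt (vp p g.[0]) (vp p g.[#|A :\: B|%:Z])) ->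
  (#|F| <= \sum_(0 <= i < d.+1) 'C(m, i))%N.
Proof.
move=> p_pr sz_g val_g.
have [le_F1 | lt1F] := leqP #|F| 1.
  by rewrite (leq_trans le_F1) // big_ltn // bin0 leq_addr.
have g0 : g.[0] != 0.
  have [A [B [AF BF neAB]]] := card_gt1P lt1F.
  by apply: contraTneq (val_g A B AF BF neAB) => ->; rewrite /vp eqxx.
set e := logn p `|g.[0]|.
pose a : 'I_#|F| -> {set 'I_m.+1} := enum_val.
pose M := \matrix_(i, j) g.[(diff_size (a i) (restrict (a j)))%:Z].
pose f i : {ffun {set 'I_m} -> rat^o} := [ffun Y => (g.[(diff_size (a i) Y)%:Z])%:~R].
have M_diag i : ~~ (p ^ e.+1 %| `|M i i|)%N.
  by rewrite mxE diff_size_restrict setDv cards0 if_same pfactor_dvdn ?absz_gt0 // ltnn.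
have M_offdiag i j : i != j -> (p ^ e.+1 %| `|M i j|)%N.
  move=> neij; have neaij : a i != a j by rewrite (inj_eq enum_val_inj).
  rewrite mxE diff_size_restrict; apply: vp_lt_dvdn => //.
  by case: ifP => _; apply: val_g; rewrite ?enum_valP // eq_sym.
have f_free : free [tuple f i | i < #|F|].
  have M_free := p_dominant_row_free p_pr M_diag M_offdiag.
  by apply: (free_of_evaluations (x := restrict \o a) M_free) => i j; rewrite !mxE ffunE.
rewrite -[#|F|](size_tuple [tuple f i | i < #|F|]) -(eqP f_free).
apply: leq_trans (dim_low_degree m d); apply/dimvS/span_subvP => _ /tnthP[i ->].
by rewrite tnth_mktuple /f -[d]/(d.+1.-1) -sz_g horner_low_degree ?diff_size_low_degree.
Qed.

End Restriction.

Lemma differencing_sperner_in_LqZ (q n : nat) (L : seq nat)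
    (F : {set {set 'I_n}}) :
  {subset L <= [pred l | (l < q)%N]} -> differencing_sperner q L F ->
  forall A B, A \in F -> B \in F -> A != B -> in_LqZ L q #|A :\: B|.
Proof.
move=> L_small sperner A B AF BF neAB.
have [l Ll modAB] := sperner A B AF BF neAB.
exists l, (#|A :\: B| %/ q)%N%:Z; split => //.
rewrite -PoszM -PoszD; congr Posz.
by rewrite {1}(divn_eq #|A :\: B| q) modAB (modn_small (L_small l Ll)) addnC mulnC.
Qed.

Theorem mainTheorem7 (p k n d : nat) (L : seq nat) (F : {set {set 'I_n}})
    (g : {poly int}) :
  prime p -> (0 < k)%N ->
  {subset L <= [pred l | (0 < l < p ^ k)%N]} ->
  differencing_sperner (p ^ k) L F ->
  size g = d.+1 ->
  (forall u : int, in_LqZ L (p ^ k) u -> olt (vp p g.[0%R]) (vp p g.[u])) ->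
  (#|F| <= \sum_(0 <= i < d.+1) 'C(n, i))%N /\
  ((  (forall u : int, in_LqZ L (p ^ k) u -> ole (vp p g.[0%R]) (vp p g.[(u - 1)%R]))
   \/ (forall u : int, in_LqZ L (p ^ k) u -> ole (vp p g.[0%R]) (vp p g.[(u + 1)%R]))) ->
   (#|F| <= \sum_(0 <= i < d.+1) 'C(n.-1, i))%N).
Proof.
move=> p_pr _ L_range sperner sz_g val_g.
have L_small : {subset L <= [pred l | (l < p ^ k)%N]}.
  by move=> l /L_range /andP[].
have val_F A B : A \in F -> B \in F -> A != B ->
    olt (vp p g.[0]) (vp p g.[#|A :\: B|%:Z]).
  by move=> AF BF neAB; apply/val_g/(differencing_sperner_in_LqZ L_small sperner).
suff bound_pred : (#|F| <= \sum_(0 <= i < d.+1) 'C(n.-1, i))%N.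
  split=> //; apply: leq_trans bound_pred _.
  by apply: leq_sum => i _; apply/leq_bin2l/leq_pred.
case: n F {sperner} val_F => [|m] F val_F; last exact: family_card_bound p_pr sz_g val_F.
apply: (@leq_trans #|[set set0 : {set 'I_0}]|).
  by apply/subset_leq_card/subsetP => A _; rewrite inE; apply/eqP/setP => -[].
by rewrite cards1 big_ltn // bin0 leq_addr.
Qed.
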